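(* Let $G$ be a finite Abelian group, let $\hat G$ be its set of irreducible (one-dimensional) representations (characters) $\mu:G\to\mathbb{C}$, and let $g\mapsto U_g$ be a unitary representation of $G$ on a Hilbert space $\mathcal{H}$ having an orthonormal basis $\{|v_\mu\rangle\}_{\mu\in\hat G}$ with $U_g|v_\mu\rangle=\mu(g)|v_\mu\rangle$ for all $g\in G$, $\mu\in\hat G$. Let $|\psi\rangle=\sum_{\mu\in\hat G}a_\mu|v_\mu\rangle$ be a unit vector, and let $\mu_0\in\hat G$ satisfy $|a_{\mu_0}|\ge|a_\mu|$ for all $\mu\in\hat G$. Then conclusive single-state exclusion of the set $\{U_g|\psi\rangle: g\in G\}$ can be done, i.e., there exists a POVM $\{M_g\}_{g\in G}$ on $\mathcal{H}$ with $\langle\psi|U_g^\dagger M_gU_g|\psi\rangle=0$ for all $g\in G$, if and only if $$|a_{\mu_0}|\le\sum_{\mu\in\hat G,\ \mu\neq\mu_0}|a_\mu|.$$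
   Context: A POVM $\{M_g\}_{g\in G}$ on $\mathcal{H}$ is a family of positive semidefinite operators with $\sum_{g\in G}M_g=I_{\mathcal{H}}$. Conclusive single-state exclusion of $\{|u_g\rangle\}_{g\in G}$ means the existence of a POVM with $\operatorname{tr}[M_g|u_g\rangle\langle u_g|]=0$ for all $g$. *)

From HB Require Import structures.
From mathcomp Require Import all_boot all_order all_algebra all_fingroup all_solvable all_field all_character.
Set Implicit Arguments. Unset Strict Implicit. Unset Printing Implicit Defensive.
Import Order.TTheory GRing.Theory Num.Theory.
Local Open Scope ring_scope.

Definition adjmx (m p : nat) (A : 'M[algC]_(m, p)) : 'M[algC]_(p, m) :=
  (map_mx Num.conj A)^T.

Definition psd (n : nat) (M : 'M[algC]_n) : Prop :=
  adjmx M = M /\ forall x : 'cV[algC]_n, 0 <= (adjmx x *m M *m x) 0 0.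

Definition POVM (gT : finGroupType) (G : {group gT}) (n : nat)
  (M : gT -> 'M[algC]_n) : Prop :=
  (forall g, g \in G -> psd (M g)) /\ \sum_(g in G) M g = 1%:M.

Definition ketbra (n : nat) (u : 'cV[algC]_n) : 'M[algC]_n := u *m adjmx u.

Definition conclusive_exclusion (gT : finGroupType) (G : {group gT}) (n : nat)
  (u : gT -> 'cV[algC]_n) : Prop :=
  exists M : gT -> 'M[algC]_n, POVM G M /\
    forall g, g \in G -> \tr (M g *m ketbra (u g)) = 0.

From HB Require Import structures.
From mathcomp Require Import all_boot all_order all_algebra all_fingroup all_solvable all_field all_character.
From mathcomp Require Import ring lra.
Import Order.TTheory GRing.Theory Num.Theory.
Local Open Scope ring_scope.

Set Implicit Arguments.
Unset Strict Implicit.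
Unset Printing Implicit Defensive.

(* Only if: twirling the POVM gives the positive operator N = sum_g U_g^* M_g U_g.
   It annihilates psi, because <psi|N|psi> = sum_g tr(M_g U_g|psi><psi|U_g^* ) = 0,
   and it has unit diagonal <v_mu|N|v_mu> = 1, because the characters of an abelian
   group are unimodular and sum_g M_g = 1.  Reading N psi = 0 in the coordinate mu0
   and bounding the off-diagonal entries of N by Cauchy-Schwarz gives the inequality.
   If: since |a_mu0| is maximal, the inequality says that the moduli |a_mu| are the
   side lengths of a closed polygon, i.e. there are unimodular c_mu with
   sum_mu c_mu^* a_mu = 0.  The vector phi = sum_mu c_mu v_mu is then orthogonal to psi,
   and by the orthogonality of characters M_g = |G|^-1 U_g|phi><phi|U_g^* is a POVM;
   it excludes U_g psi since <U_g phi|U_g psi> = <phi|psi> = 0. *)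

Lemma adjmxE m p (A : 'M[algC]_(m, p)) i j : adjmx A i j = (A j i)^*.
Proof. by rewrite !mxE. Qed.

Lemma adjmxK m p (A : 'M[algC]_(m, p)) : adjmx (adjmx A) = A.
Proof. by apply/matrixP=> i j; rewrite !adjmxE conjCK. Qed.

Lemma adjmxD m p (A B : 'M[algC]_(m, p)) : adjmx (A + B) = adjmx A + adjmx B.
Proof. by apply/matrixP=> i j; rewrite !(adjmxE, mxE) rmorphD. Qed.

Lemma adjmxZ m p c (A : 'M[algC]_(m, p)) : adjmx (c *: A) = c^* *: adjmx A.
Proof. by apply/matrixP=> i j; rewrite !(adjmxE, mxE) rmorphM. Qed.

Lemma adjmx_sum m p (I : finType) (P : pred I) (F : I -> 'M[algC]_(m, p)) :
  adjmx (\sum_(i | P i) F i) = \sum_(i | P i) adjmx (F i).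
Proof.
apply/matrixP=> i j; rewrite adjmxE !summxE rmorph_sum.
by apply: eq_bigr => k _; rewrite adjmxE.
Qed.

Lemma adjmxM m p q (A : 'M[algC]_(m, p)) (B : 'M[algC]_(p, q)) :
  adjmx (A *m B) = adjmx B *m adjmx A.
Proof. by rewrite /adjmx map_mxM trmx_mul. Qed.

Definition braket n (y : 'cV[algC]_n) (N : 'M[algC]_n) (x : 'cV[algC]_n) : algC :=
  (adjmx y *m N *m x) 0 0.

Section Braket.
Variable n : nat.
Implicit Types (x y : 'cV[algC]_n) (N : 'M[algC]_n).

Lemma braketDl y1 y2 N x : braket (y1 + y2) N x = braket y1 N x + braket y2 N x.
Proof. by rewrite /braket adjmxD !mulmxDl mxE. Qed.

Lemma braketDr y N x1 x2 : braket y N (x1 + x2) = braket y N x1 + braket y N x2.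
Proof. by rewrite /braket mulmxDr mxE. Qed.

Lemma braketZl c y N x : braket (c *: y) N x = c^* * braket y N x.
Proof. by rewrite /braket adjmxZ -!scalemxAl mxE. Qed.

Lemma braketZr c y N x : braket y N (c *: x) = c * braket y N x.
Proof. by rewrite /braket -scalemxAr mxE. Qed.

Lemma braket_sumr (I : finType) (P : pred I) y N (F : I -> 'cV[algC]_n) :
  braket y N (\sum_(i | P i) F i) = \sum_(i | P i) braket y N (F i).
Proof. by rewrite /braket mulmx_sumr summxE. Qed.

Lemma braket_summx (I : finType) (P : pred I) y (F : I -> 'M[algC]_n) x :
  braket y (\sum_(i | P i) F i) x = \sum_(i | P i) braket y (F i) x.
Proof. by rewrite /braket mulmx_sumr mulmx_suml summxE. Qed.

Lemma braket_conjmx y (A N : 'M[algC]_n) x :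
  braket y (adjmx A *m N *m A) x = braket (A *m y) N (A *m x).
Proof. by rewrite /braket adjmxM !mulmxA. Qed.

Lemma braket_adj y N x : adjmx N = N -> braket x N y = (braket y N x)^*.
Proof. by move=> adjN; rewrite /braket -adjmxE !adjmxM adjmxK adjN mulmxA. Qed.

Lemma mxtrace_mul_ketbra N x : \tr (N *m ketbra x) = braket x N x.
Proof. by rewrite /ketbra mulmxA mxtrace_mulC /mxtrace big_ord1 /braket mulmxA. Qed.

Lemma psd_braket_kernel y N x : psd N -> braket x N x = 0 -> braket y N x = 0.
Proof.
case=> adjN N_ge0 x0; set b := braket y N x; set q := braket y N y.
(* Test the form at x - b/(1+q) y; dividing by 1 + q avoids a case split on q = 0. *)
have q_ge0 : 0 <= q := N_ge0 y.
have q_real : q^* = q by apply/CrealP/ger0_real.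
have q1_neq0 : 1 + q != 0 by rewrite gt_eqF // ltr_pwDl.
have := N_ge0 (x + (- ((1 + q)^-1 * b)) *: y).
rewrite -/(braket _ _ _) !(braketDl, braketDr, braketZl, braketZr) x0 -/q -/b.
rewrite (braket_adj _ _ adjN) -/b rmorphN rmorphM /= fmorphV rmorphD /= conjC1 q_real.
rewrite [X in 0 <= X -> _](_ : _ = - (b * b^* * ((q + 2) / (1 + q) ^+ 2))); last by field.
rewrite oppr_ge0 pmulr_lle0; last first.
  by apply: divr_gt0; [rewrite ltr_wpDl | rewrite exprn_gt0 // ltr_wpDr].
rewrite -normCK => sq_le0; apply/normr0_eq0/eqP.
by rewrite -sqrf_eq0 eq_le sq_le0 exprn_ge0.
Qed.

Lemma psd_cauchy_schwarz y N x : psd N ->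
  `|braket y N x| ^+ 2 <= braket y N y * braket x N x.
Proof.
move=> psdN; have [adjN N_ge0] := psdN.
set b := braket y N x; set p := braket y N y; set q := braket x N x.
have q_ge0 : 0 <= q := N_ge0 x.
have [q0|q_neq0] := eqVneq q 0.
  by rewrite /b (psd_braket_kernel y psdN q0) normr0 expr0n q0 mulr0.
have q_real : q^* = q by apply/CrealP/ger0_real.
have := N_ge0 (y + (- (b^* / q)) *: x).
rewrite -/(braket _ _ _) !(braketDl, braketDr, braketZl, braketZr) -/b -/p -/q.
rewrite (braket_adj _ _ adjN) -/b rmorphN rmorphM /= conjCK fmorphV /= q_real.
rewrite [X in 0 <= X -> _](_ : _ = p - `|b| ^+ 2 / q); last by rewrite normCK; field.
by rewrite subr_ge0 ler_pdivrMr // lt_def q_neq0.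
Qed.


Lemma psd_conjmx (A N : 'M[algC]_n) : psd N -> psd (adjmx A *m N *m A).
Proof.
case=> adjN N_ge0; split; first by rewrite !adjmxM adjmxK adjN mulmxA.
by move=> x; rewrite -/(braket _ _ _) braket_conjmx; apply: N_ge0.
Qed.

Lemma psd_sum (I : finType) (P : pred I) (F : I -> 'M[algC]_n) :
  (forall i, P i -> psd (F i)) -> psd (\sum_(i | P i) F i).
Proof.
move=> psdF; split.
  by rewrite adjmx_sum; apply: eq_bigr => i /psdF[].
by move=> x; rewrite -/(braket _ _ _) braket_summx; apply: sumr_ge0 => i /psdF[_]; apply.
Qed.

Lemma psd_scale_ketbra (k : algC) (u : 'cV[algC]_n) : 0 <= k -> psd (k *: ketbra u).
Proof.
move=> k_ge0; split.
  by rewrite adjmxZ /ketbra adjmxM adjmxK conj_Creal // ger0_real.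
move=> x; rewrite -scalemxAr -scalemxAl mxE /ketbra !mulmxA -(mulmxA _ (adjmx u)).
have -> : adjmx u *m x = adjmx (adjmx x *m u) by rewrite adjmxM adjmxK.
by rewrite mxE big_ord1 adjmxE mulr_ge0 // mul_conjC_ge0.
Qed.

Lemma psd_kernel_coef_le (I : finType) (v : I -> 'cV[algC]_n) N (a : I -> algC) (i0 : I) :
  psd N -> (forall i, braket (v i) N (v i) = 1) ->
  braket (\sum_i a i *: v i) N (\sum_i a i *: v i) = 0 ->
  `|a i0| <= \sum_(i | i != i0) `|a i|.
Proof.
move=> psdN N_diag /(psd_braket_kernel (v i0) psdN).
rewrite braket_sumr (bigD1 i0) //= braketZr N_diag mulr1 => /eqP.
rewrite addr_eq0 => /eqP ->; rewrite normrN.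
apply: le_trans (ler_norm_sum _ _ _) _; apply: ler_sum => i _.
rewrite braketZr normrM ler_piMr // -(expr_le1 (ltn0Sn 1)) //.
by rewrite (le_trans (psd_cauchy_schwarz _ _ psdN)) // !N_diag mulr1.
Qed.

End Braket.

Section OrthonormalBasis.
Variables (I : finType) (n : nat) (v : I -> 'cV[algC]_n).
Hypothesis v_orth : forall i j, adjmx (v i) *m v j = (i == j)%:R%:M.

Lemma adjmx_coord_mul (al be : I -> algC) :
  adjmx (\sum_i al i *: v i) *m (\sum_i be i *: v i) = (\sum_i (al i)^* * be i)%:M.
Proof.
apply/matrixP=> r s; rewrite !ord1 [RHS]mxE eqxx mulr1n.
rewrite adjmx_sum mulmx_suml summxE; apply: eq_bigr => i _.
rewrite adjmxZ mulmx_sumr summxE (bigD1 i) //= big1 ?addr0 => [|j ji].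
  by rewrite -scalemxAl -scalemxAr v_orth eqxx !mxE eqxx /= !mulr1n mulr1.
by rewrite -scalemxAl -scalemxAr v_orth eq_sym (negbTE ji) !mxE mulr0n !mulr0.
Qed.

Lemma ketbra_coord (al : I -> algC) :
  ketbra (\sum_i al i *: v i) = \sum_i \sum_j (al i * (al j)^*) *: (v i *m adjmx (v j)).
Proof.
rewrite /ketbra adjmx_sum mulmx_suml; apply: eq_bigr => i _.
rewrite mulmx_sumr; apply: eq_bigr => j _.
by rewrite adjmxZ -scalemxAl -scalemxAr scalerA.
Qed.

Hypothesis v_span : forall x : 'cV[algC]_n, exists c : I -> algC, x = \sum_i c i *: v i.

Lemma sum_ketbra_basis : \sum_i v i *m adjmx (v i) = 1%:M.
Proof.
have resolution_mul (x : 'cV[algC]_n) : (\sum_i v i *m adjmx (v i)) *m x = x.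
  have [c ->] := v_span x; rewrite mulmx_suml; apply: eq_bigr => i _.
  rewrite -mulmxA mulmx_sumr (bigD1 i) //= big1 ?addr0 => [|j ji].
    by rewrite -scalemxAr v_orth eqxx -scalemxAr mul_mx_scalar scale1r.
  by rewrite -scalemxAr v_orth eq_sym (negbTE ji) mulr0n raddf0 scaler0.
apply/matrixP => r s.
have := congr1 (fun x : 'cV[algC]_n => x r 0) (resolution_mul (delta_mx s 0)).
by rewrite -colE !mxE eqxx andbT => ->.
Qed.

End OrthonormalBasis.

Lemma prefix_sum_split (R : realDomainType) (T : Type) (f : T -> R) (c : R) :
  0 <= c -> (forall i, 0 <= f i <= c) ->
  forall (s : seq T) (u : R), 0 <= u <= 2 * \sum_(i <- s) f i ->
  exists k, `|u - 2 * \sum_(i <- take k s) f i| <= c.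
Proof.
move=> c_ge0 f_bnd; elim=> [|x s IHs] u /andP[u_ge0 u_le].
  by exists 0%N; rewrite take0 big_nil mulr0 subr0 ger0_norm //; rewrite big_nil in u_le; lra.
have [u_le_c|c_lt_u] := lerP u c.
  by exists 0%N; rewrite take0 big_nil mulr0 subr0 ger0_norm.
rewrite big_cons in u_le; have /andP[fx_ge0 fx_le] := f_bnd x.
have [u'_ge0|u'_lt0] := lerP 0 (u - 2 * f x).
  have [k hk] : exists k, `|u - 2 * f x - 2 * \sum_(i <- take k s) f i| <= c.
    by apply: IHs; lra.
  by exists k.+1; rewrite /= big_cons mulrDr opprD addrA.
exists 1%N; rewrite /= take0 big_cons big_nil addr0 ler_norml; lra.
Qed.

Lemma unit_rotation_norm (a b c : algR) :
  0 <= b -> 0 <= c -> b - c <= a -> c - b <= a -> a <= b + c ->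
  exists2 w : algC, `|w| = 1 & `|(a : algC) + (c : algC) * w| = b.
Proof.
move=> b_ge0 c_ge0 bc_le cb_le a_le.
have [ac0|ac_neq0] := eqVneq (a * c) 0.
  exists 1; first exact: normr1.
  have ab_c : a + c = b by move/eqP: ac0; rewrite mulf_eq0 => /orP[]/eqP ?; lra.
  by rewrite mulr1 -rmorphD ger0_norm ab_c.
(* Law of cosines: w = g + i sqrt(1 - g^2) with g = (b^2 - a^2 - c^2) / (2ac). *)
set D := b ^+ 2 - a ^+ 2 - c ^+ 2; set g := D / (2 * a * c).
have ac2_neq0 : 2 * a * c != 0 by rewrite -mulrA mulf_neq0 ?pnatr_eq0.
have hg : 2 * a * c * g = D by rewrite /g mulrC divfK.
have g2_le1 : g ^+ 2 <= 1.
  have D2_le : D ^+ 2 <= (2 * a * c) ^+ 2.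
    rewrite -subr_ge0.
    have -> : (2 * a * c) ^+ 2 - D ^+ 2
        = ((a + c - b) * (a + c + b)) * ((b - a + c) * (b + a - c)) by rewrite /D; ring.
    by rewrite !mulr_ge0 //; lra.
  have ac2_gt0 : 0 < (2 * a * c) ^+ 2 by rewrite exprn_even_gt0 ?ac2_neq0 ?orbT.
  by rewrite -(ler_pM2r ac2_gt0) mul1r -exprMn [g * _]mulrC hg.
set s := Num.sqrt (1 - g ^+ 2).
have s2 : s ^+ 2 = 1 - g ^+ 2 by rewrite sqr_sqrtr // subr_ge0.
have norm_rect (x y : algR) : `|(x : algC) + 'i * (y : algC)| ^+ 2 = ((x ^+ 2 + y ^+ 2 : algR) : algC).
  by rewrite normC2_rect ?algRvalP // rmorphD !rmorphXn.
exists ((g : algC) + 'i * (s : algC)).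
  by apply/eqP; rewrite -sqrp_eq1 // norm_rect s2 addrC subrK rmorph1.
apply/eqP; rewrite -(eqrXn2 (ltn0Sn 1)) //.
have -> : (a : algC) + (c : algC) * ((g : algC) + 'i * (s : algC))
    = ((a + c * g : algR) : algC) + 'i * ((c * s : algR) : algC).
  by rewrite rmorphD !rmorphM; ring.
rewrite norm_rect -rmorphXn; apply/eqP; congr algRval.
rewrite exprMn s2; transitivity (a ^+ 2 + 2 * a * c * g + c ^+ 2); first ring.
by rewrite hg /D; ring.
Qed.

Lemma unit_triangle (a b c : algR) :
  0 <= b -> 0 <= c -> b - c <= a -> c - b <= a -> a <= b + c ->
  exists z w : algC, [/\ `|z| = 1, `|w| = 1 & (a : algC) + (b : algC) * z + (c : algC) * w = 0].
Proof.
move=> b_ge0 c_ge0 bc_le cb_le a_le.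
have [w w1 acw] := unit_rotation_norm b_ge0 c_ge0 bc_le cb_le a_le.
have [b0|b_neq0] := eqVneq b 0.
  exists 1, w; split; rewrite ?normr1 // b0 rmorph0 mul0r addr0.
  by apply/normr0_eq0; rewrite acw b0.
have bC_neq0 : (b : algC) != 0 by [].
exists (- ((a : algC) + (c : algC) * w) / (b : algC)), w; split => //.
  by rewrite normrM normrN acw normfV ger0_norm // divff.
by field.
Qed.

Lemma polygon_closure (I : finType) (r : I -> algR) (i0 : I) :
  (forall i, 0 <= r i <= r i0) -> r i0 <= \sum_(i | i != i0) r i ->
  exists z : I -> algC, (forall i, `|z i| = 1) /\ \sum_i z i * (r i : algC) = 0.
Proof.
move=> r_bnd r0_le.
(* Cut the other sides into two consecutive blocks with sums x, y such that
   |x - y| <= r i0 <= x + y, and close the triangle with sides r i0, x, y. *)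
set e := [seq i <- index_enum I | i != i0].
have e_uniq : uniq e := filter_uniq _ (index_enum_uniq I).
have r0_ge0 : 0 <= r i0 by have /andP[] := r_bnd i0.
have sum_ge0 (s : seq I) : 0 <= \sum_(i <- s) r i.
  by apply: sumr_ge0 => i _; have /andP[] := r_bnd i.
have [k split_k] : exists k, `|\sum_(i <- e) r i - 2 * \sum_(i <- take k e) r i| <= r i0.
  by apply: prefix_sum_split => //; rewrite sum_ge0 /=; have := sum_ge0 e; lra.
set x := \sum_(i <- take k e) r i; set y := \sum_(i <- drop k e) r i.
have sum_e : \sum_(i <- e) r i = x + y by rewrite -big_cat cat_take_drop.
rewrite -big_filter -/e sum_e in r0_le.
move: split_k; rewrite sum_e -/x ler_norml => /andP[xy_le yx_le].
have [z [w [z1 w1 r0xy]]] :=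
  @unit_triangle (r i0) x y (sum_ge0 _) (sum_ge0 _) ltac:(lra) ltac:(lra) ltac:(lra).
pose zeta i := if i == i0 then 1 else if i \in take k e then z else w.
exists zeta; split.
  by move=> i; rewrite /zeta; case: ifP => _; [exact: normr1 | case: ifP].
rewrite (bigD1 i0) //= /zeta eqxx mul1r -big_filter -/e -{1}(cat_take_drop k e) big_cat /=.
have e_neq0 i : i \in e -> i != i0 by rewrite mem_filter => /andP[].
have := e_uniq; rewrite -{1}(cat_take_drop k e) cat_uniq => /and3P[_ /hasPn take_drop _].
have -> : \sum_(i <- take k e) zeta i * (r i : algC) = z * (x : algC).
  rewrite /x rmorph_sum mulr_sumr; apply: eq_big_seq => i i_take.
  by rewrite /zeta (negbTE (e_neq0 i (mem_take i_take))) i_take.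
have -> : \sum_(i <- drop k e) zeta i * (r i : algC) = w * (y : algC).
  rewrite /y rmorph_sum mulr_sumr; apply: eq_big_seq => i i_drop.
  by rewrite /zeta (negbTE (e_neq0 i (mem_drop i_drop))) (negbTE (take_drop i i_drop)).
by rewrite -r0xy; ring.
Qed.

Lemma exists_unimodular_orthogonal (I : finType) (a : I -> algC) (i0 : I) :
  (forall i, `|a i| <= `|a i0|) -> `|a i0| <= \sum_(i | i != i0) `|a i| ->
  exists c : I -> algC, (forall i, `|c i| = 1) /\ \sum_i (c i)^* * a i = 0.
Proof.
move=> a_max a_le.
pose r i : algR := in_algR (normr_real (a i)).
have leR (x y : algR) : (x <= y) = ((x : algC) <= y) by [].
have r_bnd i : 0 <= r i <= r i0 by rewrite !leR normr_ge0 a_max.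
have r_le : r i0 <= \sum_(i | i != i0) r i by rewrite leR rmorph_sum.
have [z [z1 zr0]] := polygon_closure r_bnd r_le.
pose phase i := if a i == 0 then 1 else a i / `|a i|.
have phase1 i : `|phase i| = 1.
  rewrite /phase; case: eqP => [_|/eqP a_neq0]; first exact: normr1.
  by rewrite normrM normfV normr_id divff // normr_eq0.
have phase_conj i : (phase i)^* * a i = `|a i|.
  rewrite /phase; case: eqP => [->|/eqP a_neq0]; first by rewrite mulr0 normr0.
  rewrite rmorphM /= fmorphV /= conj_normC mulrAC -normCKC.
  by rewrite expr2 mulfK // normr_eq0.
exists (fun i => (z i)^* * phase i); split.
  by move=> i; rewrite normrM norm_conjC z1 phase1 mulr1.
rewrite -[RHS]zr0; apply: eq_bigr => i _.
by rewrite rmorphM /= conjCK -mulrA phase_conj.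
Qed.

Lemma sum_irr_mul_conj (gT : finGroupType) (G : {group gT}) (i j : Iirr G) :
  \sum_(g in G) 'chi_i g * ('chi_j g)^* = #|G|%:R * (i == j)%:R.
Proof. by rewrite -(cfdot_irr i j) cfdotE mulrA divff ?mul1r ?neq0CG. Qed.

Section Orbit.
Variables (gT : finGroupType) (G : {group gT}) (n : nat).
Variables (v : Iirr G -> 'cV[algC]_n) (U : gT -> 'M[algC]_n).
Hypothesis v_orth : forall i j, adjmx (v i) *m v j = (i == j)%:R%:M.
Hypothesis U_eig : forall g i, g \in G -> U g *m v i = 'chi_i g *: v i.

Lemma exclusion_polygon (a : Iirr G -> algC) (i0 : Iirr G) : abelian G ->
  conclusive_exclusion G (fun g => U g *m (\sum_i a i *: v i)) ->
  `|a i0| <= \sum_(i | i != i0) `|a i|.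
Proof.
move=> cG [M [[M_psd M_sum] M_excl]].
set psi := \sum_i a i *: v i in M_excl *.
pose N := \sum_(g in G) adjmx (U g) *m M g *m U g.
apply: (@psd_kernel_coef_le _ _ v N).
- by apply: psd_sum => g gG; apply/psd_conjmx/M_psd.
- move=> i; transitivity (braket (v i) (\sum_(g in G) M g) (v i)); last first.
    by rewrite M_sum /braket mulmx1 v_orth eqxx mxE.
  rewrite !braket_summx; apply: eq_bigr => g gG.
  rewrite braket_conjmx U_eig // braketZl braketZr mulrA -normCKC.
  by rewrite normC_lin_char ?expr1n ?mul1r //; apply/char_abelianP.
- rewrite braket_summx big1 // => g gG.
  by rewrite braket_conjmx -mxtrace_mul_ketbra M_excl.
Qed.

Lemma mulmx_coord_orbit (c : Iirr G -> algC) g : g \in G ->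
  U g *m (\sum_i c i *: v i) = \sum_i (c i * 'chi_i g) *: v i.
Proof.
move=> gG; rewrite mulmx_sumr; apply: eq_bigr => i _.
by rewrite -scalemxAr U_eig // scalerA.
Qed.

Hypothesis v_span : forall x : 'cV[algC]_n, exists c : Iirr G -> algC,
  x = \sum_i c i *: v i.

Lemma sum_ketbra_orbit (c : Iirr G -> algC) : (forall i, `|c i| = 1) ->
  \sum_(g in G) ketbra (U g *m (\sum_i c i *: v i)) = #|G|%:R *: 1%:M.
Proof.
move=> c1.
have coef i j : \sum_(g in G) c i * 'chi_i g * (c j * 'chi_j g)^* = #|G|%:R * (i == j)%:R.
  transitivity (c i * (c j)^* * \sum_(g in G) 'chi_i g * ('chi_j g)^*).
    by rewrite mulr_sumr; apply: eq_bigr => g _; rewrite rmorphM /=; ring.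
  rewrite sum_irr_mul_conj; case: (eqVneq i j) => [<-|_]; last by rewrite !mulr0.
  by rewrite -normCK c1 expr1n mul1r.
rewrite -(sum_ketbra_basis v_orth v_span) scaler_sumr.
under eq_bigr => g gG do rewrite mulmx_coord_orbit // ketbra_coord.
rewrite exchange_big; apply: eq_bigr => i _; rewrite exchange_big /=.
under eq_bigr => j _ do rewrite -scaler_suml coef.
rewrite (bigD1 i) //= big1 ?addr0 ?eqxx ?mulr1 // => j ji.
by rewrite eq_sym (negbTE ji) mulr0 scale0r.
Qed.

Hypothesis U_isometry : forall g, g \in G -> adjmx (U g) *m U g = 1%:M.

Lemma exclusion_of_orthogonal (c : Iirr G -> algC) (psi : 'cV[algC]_n) :
  (forall i, `|c i| = 1) -> adjmx (\sum_i c i *: v i) *m psi = 0 ->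
  conclusive_exclusion G (fun g => U g *m psi).
Proof.
move=> c1 phi_psi; set phi := \sum_i c i *: v i in phi_psi *.
exists (fun g => #|G|%:R^-1 *: ketbra (U g *m phi)); split; first split.
- by move=> g _; apply/psd_scale_ketbra; rewrite invr_ge0 ler0n.
- by rewrite -scaler_sumr sum_ketbra_orbit // scalerA mulVf ?neq0CG // scale1r.
move=> g gG; have Uphi_Upsi : adjmx (U g *m phi) *m (U g *m psi) = 0.
  by rewrite adjmxM mulmxA -(mulmxA _ (adjmx (U g))) U_isometry // mulmx1.
rewrite mxtrace_mul_ketbra /braket /ketbra -scalemxAr -scalemxAl.
by rewrite [adjmx (U g *m psi) *m _]mulmxA -mulmxA Uphi_Upsi mulmx0 scaler0 mxE.
Qed.

End Orbit.

Theorem proposition1 (gT : finGroupType) (G : {group gT}) (cG : abelian G)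
  (n : nat) (v : Iirr G -> 'cV[algC]_n) (U : gT -> 'M[algC]_n)
  (* {v_mu} is an orthonormal basis of H = C^n *)
  (v_orth : forall i j, adjmx (v i) *m v j = (i == j)%:R%:M)
  (v_span : forall x : 'cV[algC]_n, exists c : Iirr G -> algC,
              x = \sum_i c i *: v i)
  (* g |-> U_g is a unitary representation of G *)
  (U_unitary : forall g, g \in G ->
                 adjmx (U g) *m U g = 1%:M /\ U g *m adjmx (U g) = 1%:M)
  (U_mul : forall g h, g \in G -> h \in G -> U (g * h)%g = U g *m U h)
  (U_eig : forall g i, g \in G -> U g *m v i = 'chi_i g *: v i)
  (a : Iirr G -> algC)
  (psi_unit : adjmx (\sum_i a i *: v i) *m (\sum_i a i *: v i) = 1%:M)
  (i0 : Iirr G) (i0_max : forall i, `|a i| <= `|a i0|) :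
  conclusive_exclusion G (fun g => U g *m (\sum_i a i *: v i))
  <-> `|a i0| <= \sum_(i | i != i0) `|a i|.
Proof.
split; first exact: exclusion_polygon v_orth U_eig a i0 cG.
move=> polygon; have [c [c1 c_orth]] := exists_unimodular_orthogonal i0_max polygon.
apply: (exclusion_of_orthogonal v_orth U_eig v_span _ c1).
  by move=> g /U_unitary[].
by rewrite adjmx_coord_mul // c_orth raddf0.
Qed.
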